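(* Let $\mathcal{H}$ and $\mathcal{K}$ be graded connected Hopf algebras over a field $\Bbbk$ of characteristic different from $2$, let $\varphi:\mathcal{H}\to\Bbbk$ and $\psi:\mathcal{K}\to\Bbbk$ be characters, and let $\Phi:\mathcal{H}\to\mathcal{K}$ be a morphism of graded Hopf algebras with $\psi\circ\Phi=\varphi$. Then $\psi_+\circ\Phi=\varphi_+$ and $\psi_-\circ\Phi=\varphi_-$.
   Context: A character on a Hopf algebra $\mathcal{H}$ is an algebra morphism $\mathcal{H}\to\Bbbk$. The convolution product of linear functionals $\rho,\psi:\mathcal{H}\to\Bbbk$ is $\rho\psi=m\circ(\rho\otimes\psi)\circ\Delta$, where $\Delta$ is the coproduct of $\mathcal{H}$ and $m$ the multiplication of $\Bbbk$; characters form a group under convolution with unit the counit $\epsilon$. For a graded Hopf algebra and a functional $\varphi$, define $\bar\varphi(h)=(-1)^n\varphi(h)$ for $h$ homogeneous of degree $n$. A functional $\varphi$ is even if $\bar\varphi=\varphi$, and odd if it is convolution-invertible and $\bar\varphi=\varphi^{-1}$. On a graded connected Hopf algebra (degree-$0$ part equal to $\Bbbk\cdot 1$) every character $\varphi$ factors uniquely as $\varphi=\varphi_+\varphi_-$ (convolution product) with $\varphi_+$ an even character and $\varphi_-$ an odd character; $\varphi_+$ and $\varphi_-$ are called the even and odd parts of $\varphi$. *)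

(* MathComp has no tensor products, so an element of H (x) H is represented
   by a finite list of pairs [:: (a_1,b_1); ...] standing for sum_i a_i (x) b_i.
   Two such lists represent the same tensor iff every pair of linear
   functionals f, g takes the same value sum_i f a_i * g b_i on them (over a
   field, H* (x) H* separates the points of H (x) H); [tens_eq] is this
   equality. *)
From HB Require Import structures.
From mathcomp Require Import all_boot all_order all_algebra.

Set Implicit Arguments.
Unset Strict Implicit.
Unset Printing Implicit Defensive.

Import GRing.Theory.
Local Open Scope ring_scope.

Section Hopf.
Variable k : fieldType.

Definition klinear (U V : lmodType k) (f : U -> V) : Prop :=
  forall (a : k) (x y : U), f (a *: x + y) = a *: f x + f y.

Definition lfun (U : lmodType k) (f : U -> k) : Prop :=
  forall (a : k) (x y : U), f (a *: x + y) = a * f x + f y.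

Definition tens_eq (U V : lmodType k) (s t : seq (U * V)) : Prop :=
  forall (f : U -> k) (g : V -> k), lfun f -> lfun g ->
    \sum_(p <- s) f p.1 * g p.2 = \sum_(p <- t) f p.1 * g p.2.

Record hopf_data (H : algType k) := HopfData {
  coprod : H -> seq (H * H);
  counit : H -> k;
  antipode : H -> H;
  gproj : nat -> H -> H;
  gbound : H -> nat              (* the components of x vanish in degrees >= gbound x *)
}.

Section Laws.
Variables (H : algType k) (D : hopf_data H).
Local Notation Delta := (coprod D).
Local Notation eps := (counit D).
Local Notation S := (antipode D).
Local Notation pi := (gproj D).

Definition hopf_laws : Prop :=
  [/\ forall (a : k) (x y : H),
        tens_eq (Delta (a *: x + y)) ([seq (a *: p.1, p.2) | p <- Delta x] ++ Delta y),
  (* coassociativity, tested in H (x) H (x) H by triples of functionals *)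
      forall (x : H) (f g h : H -> k), lfun f -> lfun g -> lfun h ->
        \sum_(p <- Delta x) (\sum_(q <- Delta p.1) f q.1 * g q.2) * h p.2
        = \sum_(p <- Delta x) f p.1 * (\sum_(q <- Delta p.2) g q.1 * h q.2),
      lfun eps /\ forall x : H,
        \sum_(p <- Delta x) eps p.1 *: p.2 = x /\ \sum_(p <- Delta x) eps p.2 *: p.1 = x,
      [/\ tens_eq (Delta 1) [:: (1, 1)],
          forall x y : H, tens_eq (Delta (x * y))
              [seq (p.1 * q.1, p.2 * q.2) | p <- Delta x, q <- Delta y],
          eps 1 = 1 &
          forall x y : H, eps (x * y) = eps x * eps y] &
      klinear S /\ forall x : H,
        \sum_(p <- Delta x) S p.1 * p.2 = eps x *: 1 /\
        \sum_(p <- Delta x) p.1 * S p.2 = eps x *: 1].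

Definition homogeneous (n : nat) (x : H) : Prop := pi n x = x.

Definition graded_laws : Prop :=
  [/\ (* H = (+)_n H_n, with pi n the projections *)
      forall n, klinear (pi n),
      forall n m (x : H), pi n (pi m x) = if n == m then pi m x else 0,
      forall (x : H), (forall n, (gbound D x <= n)%N -> pi n x = 0) /\
                      x = \sum_(n < gbound D x) pi n x,
      homogeneous 0 1 /\ forall i j (x y : H),
        homogeneous i x -> homogeneous j y -> homogeneous (i + j) (x * y) &
      [/\ forall n (x : H), homogeneous n x ->
            tens_eq (Delta x)
              [seq (pi i p.1, pi (n - i)%N p.2) | i <- iota 0 n.+1, p <- Delta x],
          forall n (x : H), homogeneous n x -> (0 < n)%N -> eps x = 0 &
          forall n (x : H), homogeneous n x -> homogeneous n (S x)]].

Definition connected : Prop :=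
  forall x : H, homogeneous 0 x -> exists c : k, x = c%:A.

Definition graded_connected_hopf : Prop :=
  [/\ hopf_laws, graded_laws & connected].

Definition conv (rho chi : H -> k) : H -> k :=
  fun x => \sum_(p <- Delta x) rho p.1 * chi p.2.

Definition character (f : H -> k) : Prop :=
  [/\ lfun f, forall x y : H, f (x * y) = f x * f y & f 1 = 1].

Definition bar (f : H -> k) : H -> k :=
  fun x => \sum_(n < gbound D x) (-1) ^+ n * f (pi n x).

Definition even_fun (f : H -> k) : Prop := bar f =1 f.

Definition odd_fun (f : H -> k) : Prop :=
  exists g : H -> k, [/\ lfun g, conv f g =1 eps, conv g f =1 eps & bar f =1 g].

End Laws.

Definition graded_hopf_morphism (H K : algType k) (DH : hopf_data H)
    (DK : hopf_data K) (Phi : H -> K) : Prop :=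
  [/\ klinear Phi,
      Phi 1 = 1 /\ forall x y : H, Phi (x * y) = Phi x * Phi y,
      forall x : H, tens_eq (coprod DK (Phi x))
                            [seq (Phi p.1, Phi p.2) | p <- coprod DH x],
      forall x : H, counit DK (Phi x) = counit DH x &
      (forall x : H, antipode DK (Phi x) = Phi (antipode DH x)) /\
      (forall n (x : H), gproj DK n (Phi x) = Phi (gproj DH n x))].

End Hopf.

(* Both (phi_+, phi_-) and (psi_+ o Phi, psi_- o Phi) factor phi = psi o Phi
   as an even times an odd functional, so it suffices that such a
   factorization is unique.  This is proved degree by degree: for x
   homogeneous of degree n > 0, connectedness gives
   (f g)(x) = f x + g x + (terms involving only degrees 1 .. n-1).
   In odd degree the even factors vanish, so the odd factors agree.  In even
   degree an odd g satisfies g (bar g) = eps with (bar g)(x) = g x, hence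
   2 g x is determined by lower degrees; here char k <> 2 is used. *)
From HB Require Import structures.
From mathcomp Require Import all_boot all_order all_algebra.
From mathcomp Require Import zify.
Local Open Scope ring_scope.

Set Implicit Arguments.
Unset Strict Implicit.
Unset Printing Implicit Defensive.
Import GRing.Theory.

Section LinearFunctionals.
Variables (k : fieldType) (U : lmodType k) (f : U -> k).
Hypothesis hf : lfun f.

Lemma lfun0 : f 0 = 0.
Proof.
have := hf 1 0 0; rewrite scale1r addr0 mul1r => e.
by apply: (addrI (f 0)); rewrite addr0 -e.
Qed.

Lemma lfunD x y : f (x + y) = f x + f y.
Proof. by have := hf 1 x y; rewrite scale1r mul1r. Qed.

Lemma lfunZ a x : f (a *: x) = a * f x.
Proof. by have := hf a x 0; rewrite !addr0 lfun0 addr0. Qed.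

Lemma lfun_sum (I : Type) (r : seq I) (P : pred I) (F : I -> U) :
  f (\sum_(i <- r | P i) F i) = \sum_(i <- r | P i) f (F i).
Proof. exact: (big_morph f lfunD lfun0). Qed.

Lemma lfun_sumZ (I : Type) (r : seq I) (c : I -> k) (F : I -> U) :
  f (\sum_(i <- r) c i *: F i) = \sum_(i <- r) c i * f (F i).
Proof. by rewrite lfun_sum; apply: eq_bigr => i _; rewrite lfunZ. Qed.

Lemma lfun_comp (V : lmodType k) (g : V -> U) : klinear g -> lfun (f \o g).
Proof. by move=> hg a x y /=; rewrite hg hf. Qed.

End LinearFunctionals.

Section GradedConnected.
Variables (k : fieldType) (H : algType k) (D : hopf_data H).
Hypothesis hH : graded_connected_hopf D.
Local Notation pi := (gproj D).
Local Notation eps := (counit D).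
Local Notation Delta := (coprod D).

Lemma gproj_klinear n : klinear (pi n).
Proof. by case: hH => _ []. Qed.

Lemma homogeneous_gproj n y : homogeneous D n (pi n y).
Proof. by case: hH => _ [_ hpi _ _ _] _; rewrite /homogeneous hpi eqxx. Qed.

Lemma homogeneous1 : homogeneous D 0 1.
Proof. by case: hH => _ [_ _ _ []]. Qed.

Lemma lfun_gproj_sum (f : H -> k) y :
  lfun f -> f y = \sum_(m < gbound D y) f (pi m y).
Proof.
move=> hf; case: hH => _ [_ _ hsum _ _] _; have [_ e] := hsum y.
by rewrite {1}e lfun_sum.
Qed.

Lemma lfun_homogeneous_eq (f g : H -> k) : lfun f -> lfun g ->
  (forall n x, homogeneous D n x -> f x = g x) -> f =1 g.
Proof.
move=> hf hg e y; rewrite (lfun_gproj_sum y hf) (lfun_gproj_sum y hg).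
by apply: eq_bigr => m _; apply: e (homogeneous_gproj m y).
Qed.

Lemma counit_lfun : lfun eps.
Proof. by case: hH => [[_ _ []]]. Qed.

Lemma bar_homogeneous (f : H -> k) n y : lfun f -> homogeneous D n y ->
  bar D f y = (-1) ^+ n * f y.
Proof.
move=> hf hy; case: hH => _ [_ hpi _ _ _] _.
have pi_other j : j != n -> pi j y = 0 by rewrite -hy hpi => /negbTE ->.
rewrite /bar (lfun_gproj_sum y hf) mulr_sumr; apply: eq_bigr => m _.
have [-> // | ne] := eqVneq (m : nat) n.
by rewrite pi_other // lfun0 // !mulr0.
Qed.

Lemma unital_lfun_degree0 (f g : H -> k) x : lfun f -> lfun g ->
  f 1 = 1 -> g 1 = 1 -> homogeneous D 0 x -> f x = g x.
Proof.
move=> hf hg f1 g1 hx; case: hH => _ _ hconn; have [c ->] := hconn x hx.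
by rewrite (lfunZ hf) (lfunZ hg) f1 g1.
Qed.

Lemma unital_lfun_gproj0 (f : H -> k) y :
  lfun f -> f 1 = 1 -> f (pi 0 y) = eps y.
Proof.
move=> hf f1; case: hH => [[_ _ _ [_ _ e1 _] _] [_ _ hsum _ [_ heps _]] _].
rewrite (unital_lfun_degree0 hf counit_lfun f1 e1 (homogeneous_gproj 0 y)).
rewrite [RHS](lfun_gproj_sum y counit_lfun).
case E: (gbound D y) => [|N].
  by rewrite big_ord0 (proj1 (hsum y)) ?E // (lfun0 counit_lfun).
rewrite big_ord_recl /= big1 ?addr0 // => i _.
exact: heps (homogeneous_gproj _ y) _.
Qed.

Definition conv_mid (f g : H -> k) n x :=
  \sum_(i <- iota 1 n.-1) \sum_(p <- Delta x) f (pi i p.1) * g (pi (n - i) p.2).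

Lemma conv_homogeneous (f g : H -> k) n x : lfun f -> lfun g ->
  f 1 = 1 -> g 1 = 1 -> homogeneous D n x -> (0 < n)%N ->
  conv D f g x = g x + (conv_mid f g n x + f x).
Proof.
move=> hf hg f1 g1 hx; case: n hx => // m hx _.
case: hH => [[_ _ [_ hcounit] _ _] [_ _ _ _ [hgrad _ _]] _].
rewrite /conv (hgrad _ x hx f g hf hg) big_allpairs_dep.
have -> : iota 0 m.+2 = 0%N :: rcons (iota 1 m) m.+1.
  by rewrite -cats1 -addn1 iotaD.
rewrite big_cons -cats1 big_cat big_seq1 /= subn0 subnn.
congr (_ + (_ + _)).
- under eq_bigr do rewrite unital_lfun_gproj0 //.
  rewrite -(lfun_sumZ (lfun_comp hg (gproj_klinear _))) /=.
  by rewrite (proj1 (hcounit x)) hx.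
- under eq_bigr do rewrite (unital_lfun_gproj0 _ hg g1) mulrC.
  rewrite -(lfun_sumZ (lfun_comp hf (gproj_klinear _))) /=.
  by rewrite (proj2 (hcounit x)) hx.
Qed.

Lemma conv_mid_eq (f1 g1 f2 g2 : H -> k) n x :
  (forall i y, (0 < i < n)%N -> homogeneous D i y -> f1 y = f2 y) ->
  (forall i y, (0 < i < n)%N -> homogeneous D i y -> g1 y = g2 y) ->
  conv_mid f1 g1 n x = conv_mid f2 g2 n x.
Proof.
move=> hf hg; rewrite /conv_mid !big_seq; apply: eq_bigr => i.
rewrite mem_iota => /andP[i_gt0 i_lt]; apply: eq_bigr => p _.
rewrite (hf i) ?(hg (n - i)%N) //; try exact: homogeneous_gproj; lia.
Qed.

Definition vanishes_in_odd_degrees (f : H -> k) : Prop :=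
  forall n x, homogeneous D n x -> odd n -> f x = 0.

Definition sign_twist (f g : H -> k) : Prop :=
  forall n x, homogeneous D n x -> g x = (-1) ^+ n * f x.

Lemma even_fun_vanishes_in_odd_degrees (f : H -> k) : (2%:R : k) != 0 ->
  lfun f -> even_fun D f -> vanishes_in_odd_degrees f.
Proof.
move=> h2 hf he n x hx on.
have := he x; rewrite (bar_homogeneous hf hx) -signr_odd on expr1 mulN1r => e.
have : f x * 2%:R = 0 by rewrite mulr_natr mulr2n -{1}e addNr.
by move/eqP; rewrite mulf_eq0 (negbTE h2) orbF => /eqP.
Qed.

Lemma bar_sign_twist (f g : H -> k) : lfun f -> bar D f =1 g -> sign_twist f g.
Proof. by move=> hf hg n x hx; rewrite -hg (bar_homogeneous hf hx). Qed.

Section UniqueFactorization.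
Variables (u v a b gv gb : H -> k).
Hypotheses (h2 : (2%:R : k) != 0)
  (lu : lfun u) (lv : lfun v) (la : lfun a) (lb : lfun b)
  (lgv : lfun gv) (lgb : lfun gb)
  (u1 : u 1 = 1) (v1 : v 1 = 1) (a1 : a 1 = 1) (b1 : b 1 = 1)
  (u_odd : vanishes_in_odd_degrees u) (a_odd : vanishes_in_odd_degrees a)
  (v_gv : conv D v gv =1 eps) (b_gb : conv D b gb =1 eps)
  (gv_twist : sign_twist v gv) (gb_twist : sign_twist b gb)
  (uv_ab : conv D u v =1 conv D a b).

Let agree_below (f g : H -> k) n :=
  forall i y, (0 < i < n)%N -> homogeneous D i y -> f y = g y.

Lemma sign_twist_unital : gv 1 = 1 /\ gb 1 = 1.
Proof.
by rewrite (gv_twist homogeneous1) (gb_twist homogeneous1) v1 b1 mulr1.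
Qed.

Lemma odd_factor_eq_homogeneous n x : agree_below u a n -> agree_below v b n ->
  homogeneous D n x -> (0 < n)%N -> v x = b x.
Proof.
move=> hua hvb hx n_gt0.
have [on | en] := boolP (odd n).
  move: (uv_ab x).
  rewrite (conv_homogeneous lu lv u1 v1 hx) //.
  rewrite (conv_homogeneous la lb a1 b1 hx) // (conv_mid_eq _ hua hvb).
  by rewrite (u_odd hx on) (a_odd hx on) !addr0 => /addIr.
have hgg : agree_below gv gb n.
  by move=> i y hi hy; rewrite (gv_twist hy) (gb_twist hy) (hvb i).
have [gv1 gb1] := sign_twist_unital.
have := v_gv x; rewrite -b_gb.
rewrite (conv_homogeneous lv lgv v1 gv1 hx) //.
rewrite (conv_homogeneous lb lgb b1 gb1 hx) // (conv_mid_eq _ hvb hgg).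
rewrite (gv_twist hx) (gb_twist hx) -signr_odd (negbTE en) expr0 !mul1r.
rewrite addrCA [RHS]addrCA => /addrI twice_eq.
by apply: (mulIf h2); rewrite !mulr_natr !mulr2n.
Qed.

Lemma factors_eq_homogeneous n x : homogeneous D n x -> u x = a x /\ v x = b x.
Proof.
elim/ltn_ind: n x => -[|n] IH x hx.
  by split; apply: unital_lfun_degree0.
have hua : agree_below u a n.+1 by move=> i y /andP[_ /IH] /[apply] -[].
have hvb : agree_below v b n.+1 by move=> i y /andP[_ /IH] /[apply] -[].
have vb := odd_factor_eq_homogeneous hua hvb hx isT.
split=> //; move: (uv_ab x).
rewrite (conv_homogeneous lu lv u1 v1 hx) // (conv_homogeneous la lb a1 b1 hx) //.
by rewrite (conv_mid_eq _ hua hvb) vb => /addrI/addrI.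
Qed.

Lemma factors_eq : u =1 a /\ v =1 b.
Proof.
by split; apply: lfun_homogeneous_eq => // n x /factors_eq_homogeneous -[].
Qed.

End UniqueFactorization.

End GradedConnected.

Section Morphism.
Variables (k : fieldType) (H K : algType k) (DH : hopf_data H) (DK : hopf_data K).
Variable Phi : H -> K.
Hypothesis hPhi : graded_hopf_morphism DH DK Phi.

Lemma homogeneous_morphism n x :
  homogeneous DH n x -> homogeneous DK n (Phi x).
Proof.
by case: hPhi => _ _ _ _ [_ hpi] hx; rewrite /homogeneous hpi hx.
Qed.

Lemma conv_morphism (f g : K -> k) x : lfun f -> lfun g ->
  conv DK f g (Phi x) = conv DH (f \o Phi) (g \o Phi) x.
Proof.
by case: hPhi => _ _ hDelta _ _ hf hg; rewrite /conv (hDelta x f g hf hg) big_map.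
Qed.

Lemma vanishes_in_odd_degrees_comp (f : K -> k) :
  vanishes_in_odd_degrees DK f -> vanishes_in_odd_degrees DH (f \o Phi).
Proof. by move=> hf n x hx; apply: hf (homogeneous_morphism hx). Qed.

Lemma sign_twist_comp (f g : K -> k) :
  sign_twist DK f g -> sign_twist DH (f \o Phi) (g \o Phi).
Proof. by move=> hfg n x hx; apply: hfg (homogeneous_morphism hx). Qed.

End Morphism.

Theorem lemma2p2 (k : fieldType) (hk : (2 \notin [pchar k])%N)
  (H K : algType k) (DH : hopf_data H) (DK : hopf_data K)
  (hH : graded_connected_hopf DH) (hK : graded_connected_hopf DK)
  (phi : H -> k) (psi : K -> k)
  (hphi : character phi) (hpsi : character psi)
  (Phi : H -> K) (hPhi : graded_hopf_morphism DH DK Phi)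
  (hcomp : forall x : H, psi (Phi x) = phi x)
  (phip phim : H -> k) (psip psim : K -> k)
  (hphip : character phip /\ even_fun DH phip)
  (hphim : character phim /\ odd_fun DH phim)
  (hphid : phi =1 conv DH phip phim)
  (hpsip : character psip /\ even_fun DK psip)
  (hpsim : character psim /\ odd_fun DK psim)
  (hpsid : psi =1 conv DK psip psim) :
  (forall x : H, psip (Phi x) = phip x) /\ (forall x : H, psim (Phi x) = phim x).
Proof.
have h2 : (2%:R : k) != 0 by apply: contra hk => e; rewrite inE /= e.
case: hphip => [[lphip _ phip1] ephip].
case: hphim => [[lphim _ phim1] [gphim [lgphim cphim _ bphim]]].
case: hpsip => [[lpsip _ psip1] epsip].
case: hpsim => [[lpsim _ psim1] [gpsim [lgpsim cpsim _ bpsim]]].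
have [kPhi [Phi1 _] _ ePhi _] := hPhi.
have [] // := @factors_eq _ _ DH hH phip phim (psip \o Phi) (psim \o Phi)
  gphim (gpsim \o Phi) h2 lphip lphim (lfun_comp lpsip kPhi)
  (lfun_comp lpsim kPhi) lgphim (lfun_comp lgpsim kPhi).
- by rewrite /= Phi1.
- by rewrite /= Phi1.
- exact: even_fun_vanishes_in_odd_degrees.
- exact/(vanishes_in_odd_degrees_comp hPhi)/even_fun_vanishes_in_odd_degrees.
- by move=> x; rewrite -(conv_morphism hPhi) // cpsim ePhi.
- exact: bar_sign_twist.
- exact/(sign_twist_comp hPhi)/bar_sign_twist.
- by move=> x; rewrite -hphid -hcomp hpsid (conv_morphism hPhi).
- by move=> ep em; split=> x; [rewrite ep | rewrite em].
Qed.
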